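(* Let $\mu$ be a PTP-monotone. If $A\in H_n$ and $B\in H_k$ satisfy $\|A_+\|_1=\|B_+\|_1$ and $\|A_-\|_1=\|B_-\|_1$, then $\mu(A)=\mu(B)$; i.e. $\mu(A)$ is a function of $(\|A_+\|_1,\|A_-\|_1)$.
   Context: $H_n$ denotes the $n\times n$ complex Hermitian matrices. A linear map $\Phi:H_n\to H_k$ is PTP if it maps positive semidefinite matrices to positive semidefinite matrices and $\operatorname{tr}\Phi(X)=\operatorname{tr}X$ for all $X$. A function $\mu:\bigcup_{n\in\mathbb N}H_n\to\mathbb R$ is a PTP-monotone if $\mu(\Phi(A))\leq\mu(A)$ for all $n,k$, all PTP maps $\Phi:H_n\to H_k$ and all $A\in H_n$. Every $A$ decomposes uniquely as $A=A_+-A_-$ with $A_\pm$ positive semidefinite and $A_+A_-=0$. $\|\cdot\|_1$ is the trace norm. *)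

From HB Require Import structures.
From mathcomp Require Import all_boot all_order all_algebra.
From mathcomp Require Import boolp classical_sets reals.
From mathcomp Require Import complex.
Set Implicit Arguments. Unset Strict Implicit. Unset Printing Implicit Defensive.
Import Order.TTheory GRing.Theory Num.Theory.
Local Open Scope ring_scope.

Definition adjmx (R : realType) (m n : nat) (A : 'M[R[i]]_(m, n)) : 'M[R[i]]_(n, m) :=
  map_mx (fun z => (z^*)%C) A^T.

Definition is_hermitian (R : realType) (n : nat) (A : 'M[R[i]]_n) : Prop :=
  adjmx A = A.

Definition is_psd (R : realType) (n : nat) (A : 'M[R[i]]_n) : Prop :=
  is_hermitian A /\ forall v : 'cV[R[i]]_n, 0 <= (adjmx v *m A *m v) 0 0.

(* trace norm ||X||_1 = tr |X|, |X| = the (unique) PSD square root of X^* X *)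
Definition trnorm (R : realType) (n : nat) (X : 'M[R[i]]_n) : R :=
  @complex.Re R (\tr (xget 0 [set S : 'M[R[i]]_n | is_psd S /\ S *m S = adjmx X *m X])).

Definition pos_neg_parts (R : realType) (n : nat) (A P N : 'M[R[i]]_n) : Prop :=
  [/\ is_psd P, is_psd N, A = P - N & P *m N = 0].

(* PTP maps H_(n+1) -> H_(k+1): real-linear, positivity- and trace-preserving.
   Phi is given on all matrices but only its restriction to H_n matters. *)
Definition PTP (R : realType) (n k : nat) (Phi : 'M[R[i]]_n.+1 -> 'M[R[i]]_k.+1) : Prop :=
  [/\ (forall X, is_hermitian X -> is_hermitian (Phi X)),
      (forall (a : R) X Y, is_hermitian X -> is_hermitian Y ->
          Phi (a%:C%C *: X + Y) = a%:C%C *: Phi X + Phi Y),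
      (forall X, is_psd X -> is_psd (Phi X)) &
      (forall X, is_hermitian X -> \tr (Phi X) = \tr X)].

(* mu : U_{n >= 1} H_n -> R, given on all square matrices of size n.+1 *)
Definition PTP_monotone (R : realType) (mu : forall n : nat, 'M[R[i]]_n.+1 -> R) : Prop :=
  forall (n k : nat) (Phi : 'M[R[i]]_n.+1 -> 'M[R[i]]_k.+1),
    PTP Phi -> forall A, is_hermitian A -> mu k (Phi A) <= mu n A.

From HB Require Import structures.
From mathcomp Require Import all_boot all_order all_algebra.
From mathcomp Require Import boolp classical_sets reals.
From mathcomp Require Import complex.
From mathcomp Require Import ring lra.
Import Order.TTheory GRing.Theory Num.Theory.
Local Open Scope ring_scope.

(* For a positive semidefinite P the trace norm is just the trace,
   so the hypotheses say tr A_+ = tr B_+ and tr A_- = tr B_-.  Let Q be the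
   orthogonal projection onto the range of A_+; then Q A_+ = A_+ and Q A_- = 0.
   Writing B_+ = (tr B_+) D_+ and B_- = (tr B_-) D_- with density matrices D_+-,
   the "measure-and-prepare" map
       X |-> tr (Q X) D_+ + tr ((1 - Q) X) D_-
   is PTP and sends A to B.  By symmetry there is also a PTP map sending B to
   A, and monotonicity of mu along both maps gives mu(A) = mu(B). *)

Section PTPMonotone.
Variable R : realType.
Local Notation C := (R[i]).
Set Implicit Arguments.

Lemma adjmxK m n (A : 'M[C]_(m, n)) : adjmx (adjmx A) = A.
Proof. by apply/matrixP=> i j; rewrite !mxE conjcK. Qed.

Lemma adjmxM m n p (A : 'M[C]_(m, n)) (B : 'M[C]_(n, p)) :
  adjmx (A *m B) = adjmx B *m adjmx A.
Proof. by rewrite /adjmx trmx_mul map_mxM. Qed.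

Lemma adjmxD m n (A B : 'M[C]_(m, n)) : adjmx (A + B) = adjmx A + adjmx B.
Proof. by rewrite /adjmx linearD map_mxD. Qed.

Lemma adjmxB m n (A B : 'M[C]_(m, n)) : adjmx (A - B) = adjmx A - adjmx B.
Proof. by rewrite /adjmx linearB map_mxB. Qed.

Lemma adjmxZ m n (c : C) (A : 'M[C]_(m, n)) : adjmx (c *: A) = c^*%C *: adjmx A.
Proof. by apply/matrixP=> i j; rewrite !mxE rmorphM. Qed.

Lemma adjmx0 m n : adjmx (0 : 'M[C]_(m, n)) = 0.
Proof. by apply/matrixP=> i j; rewrite !mxE conjc0. Qed.

Lemma adjmx1 n : adjmx (1%:M : 'M[C]_n) = 1%:M.
Proof. by apply/matrixP=> i j; rewrite !mxE conjc_nat eq_sym. Qed.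

Lemma tr_adjmx n (A : 'M[C]_n) : \tr (adjmx A) = (\tr A)^*%C.
Proof. by rewrite /mxtrace rmorph_sum; apply: eq_bigr=> i _; rewrite !mxE. Qed.

Lemma ge0_conj (x : C) : 0 <= x -> x^*%C = x.
Proof. by move=> /ger0_Im; case: x => a b /= ->; rewrite /conjc oppr0. Qed.

Lemma ge0_Re (x : C) : 0 <= x -> (complex.Re x)%:C%C = x.
Proof. by move=> /ger0_Im; case: x => a b /= ->. Qed.

Lemma gram_diag m n (X : 'M[C]_(m, n)) j :
  (adjmx X *m X) j j = \sum_i (X i j)^*%C * X i j.
Proof. by rewrite !mxE; apply: eq_bigr=> i _; rewrite !mxE. Qed.

Lemma gram_diag_ge0 m n (X : 'M[C]_(m, n)) j : 0 <= (adjmx X *m X) j j.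
Proof. by rewrite gram_diag sumr_ge0 // => i _; rewrite mulrC mulcJ_ge0. Qed.

Lemma gram_diag_eq0 m n (X : 'M[C]_(m, n)) j :
  (adjmx X *m X) j j = 0 -> forall i, X i j = 0.
Proof.
rewrite gram_diag => h0 i.
have : (X i j)^*%C * X i j = 0.
  by apply: (psumr_eq0P _ h0) => // l _; rewrite mulrC mulcJ_ge0.
by move/eqP; rewrite mulf_eq0 conjc_eq0 orbb => /eqP.
Qed.

Lemma gram_eq0 m n (X : 'M[C]_(m, n)) : adjmx X *m X = 0 -> X = 0.
Proof.
by move=> h; apply/matrixP=> i j; rewrite mxE (gram_diag_eq0 X j) // h mxE.
Qed.

(* The key fact is that v^* M v = 0 forces
   M v = 0: with u = M v, a = u^* u and b = u^* M u, the form at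
   v - (a / (b + 1)) u equals - a^2 (b + 2) / (b + 1)^2, so a must vanish. *)
Lemma psd_quad_eq0 n (M : 'M[C]_n) (v : 'cV[C]_n) : is_psd M ->
  (adjmx v *m M *m v) 0 0 = 0 -> M *m v = 0.
Proof.
move=> [hM pM] hv; set u := M *m v.
have Mv_uu : adjmx v *m M *m u = adjmx u *m u by rewrite adjmxM hM.
have Mu_uu : adjmx u *m M *m v = adjmx u *m u by rewrite -mulmxA.
have shift (t : C) : t^*%C = t ->
    adjmx (v - t *: u) *m M *m (v - t *: u) =
    adjmx v *m M *m v - (t *: (adjmx u *m u)) *+ 2 + (t * t) *: (adjmx u *m M *m u).
  move=> ht; rewrite adjmxB adjmxZ ht !(mulmxBl, mulmxBr) -!scalemxAl -!scalemxAr.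
  by rewrite scalerA Mv_uu Mu_uu mulr2n opprB opprD !addrA addrAC.
set a := (adjmx u *m u) 0 0; set b := (adjmx u *m M *m u) 0 0.
have a_ge0 : 0 <= a := gram_diag_ge0 u 0.
have b_ge0 : 0 <= b := pM u.
suff a0 : a = 0.
  by apply/matrixP=> i j; rewrite (ord1 j) [RHS]mxE (gram_diag_eq0 u 0 a0 i).
have b1_gt0 : 0 < b + 1 by rewrite ltr_wpDl.
set t := a / (b + 1).
have := pM (v - t *: u).
rewrite shift; last by apply: ge0_conj; rewrite divr_ge0 // ltW.
have entryD (X Y : 'M[C]_1) : (X + Y) 0 0 = X 0 0 + Y 0 0 by rewrite mxE.
have entryN (X : 'M[C]_1) : (- X) 0 0 = - X 0 0 by rewrite mxE.
have entryZ (c : C) (X : 'M[C]_1) : (c *: X) 0 0 = c * X 0 0 by rewrite mxE.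
rewrite mulr2n !(entryD, entryN, entryZ) hv -/a -/b.
have -> : 0 - (t * a + t * a) + t * t * b = - (a ^+ 2 * (b + 2%:R) / (b + 1) ^+ 2).
  by rewrite /t; field; rewrite gt_eqF.
have a_gt0 : a != 0 -> 0 < a by rewrite lt0r a_ge0 andbT.
rewrite oppr_ge0; apply: contraTeq => /a_gt0 a_pos.
by rewrite lt_geF // divr_gt0 ?exprn_gt0 // mulr_gt0 ?exprn_gt0 ?ltr_wpDl ?ltr0n.
Qed.

Lemma quad_col n m (M : 'M[C]_n) (P : 'M[C]_(n, m)) j :
  (adjmx P *m M *m P) j j = (adjmx (col j P) *m M *m col j P) 0 0.
Proof.
rewrite !mxE; apply: eq_bigr => l _; rewrite !mxE; congr (_ * _).
by apply: eq_bigr => r _; rewrite !mxE.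
Qed.

Lemma tr_quad_ge0 n m (M : 'M[C]_n) (P : 'M[C]_(n, m)) : is_psd M ->
  0 <= \tr (adjmx P *m M *m P).
Proof. by move=> [_ pM]; rewrite sumr_ge0 // => j _; rewrite quad_col. Qed.

Lemma tr_quad_eq0 n m (M : 'M[C]_n) (P : 'M[C]_(n, m)) : is_psd M ->
  \tr (adjmx P *m M *m P) = 0 -> M *m P = 0.
Proof.
move=> hM h0; apply/matrixP => i j.
have col0 : (adjmx (col j P) *m M *m col j P) 0 0 = 0.
  rewrite -quad_col; apply: (psumr_eq0P _ h0) => // l _.
  by rewrite quad_col; case: hM => _; apply.
have /matrixP /(_ i 0) := psd_quad_eq0 (col j P) hM col0.
by rewrite !mxE; under eq_bigr do rewrite mxE.
Qed.

Lemma psd_tr_ge0 n (M : 'M[C]_n) : is_psd M -> 0 <= \tr M.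
Proof.
by move=> hM; have := tr_quad_ge0 1%:M hM; rewrite adjmx1 mul1mx mulmx1.
Qed.

Lemma psd_tr0 n (M : 'M[C]_n) : is_psd M -> \tr M = 0 -> M = 0.
Proof.
move=> hM; have := @tr_quad_eq0 n n M 1%:M hM.
by rewrite adjmx1 mul1mx !mulmx1.
Qed.

(* PSD square roots are unique: if S^2 = T^2 then D = S - T satisfies
   S D = - D T, so tr(D S D) = - tr(D T D); both traces are nonnegative,
   hence zero, which gives S D = T D = 0 and D^* D = 0. *)
Lemma psd_sqrt_uniq n (S T : 'M[C]_n) : is_psd S -> is_psd T ->
  S *m S = T *m T -> S = T.
Proof.
move=> hS hT hST; set D := S - T.
have hD : adjmx D = D by rewrite adjmxB hS.1 hT.1.
have SD : S *m D = - (D *m T).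
  by rewrite mulmxBr mulmxBl hST opprB addrC.
have trS : \tr (adjmx D *m S *m D) = - \tr (adjmx D *m T *m D).
  rewrite hD -mulmxA SD mulmxN linearN /=; congr (- _).
  by rewrite mxtrace_mulC -!mulmxA.
have trT0 : \tr (adjmx D *m T *m D) = 0.
  apply/eqP; rewrite eq_le tr_quad_ge0 // andbT -oppr_ge0 -trS.
  exact: tr_quad_ge0.
have trS0 : \tr (adjmx D *m S *m D) = 0 by rewrite trS trT0 oppr0.
have DD : adjmx D *m D = 0.
  by rewrite hD {1}/D mulmxBl (tr_quad_eq0 hS trS0) (tr_quad_eq0 hT trT0) subrr.
by apply/eqP; rewrite -subr_eq0 -/D (gram_eq0 DD).
Qed.

(* The trace norm of a PSD matrix is its trace: P is itself the unique PSD
   square root of P^* P. *)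
Lemma trnorm_psd n (P : 'M[C]_n.+1) : is_psd P -> (trnorm P)%:C%C = \tr P.
Proof.
move=> hP; have PP : adjmx P *m P = P *m P by rewrite hP.1.
rewrite /trnorm (@xget_unique _ 0 _ P); first by rewrite ge0_Re // psd_tr_ge0.
- by split.
- by move=> S [hS SS]; apply: psd_sqrt_uniq; rewrite // SS PP.
Qed.

Definition is_orthoproj n (Q : 'M[C]_n) : Prop := adjmx Q = Q /\ Q *m Q = Q.

Lemma orthoprojC n (Q : 'M[C]_n) : is_orthoproj Q -> is_orthoproj (1%:M - Q).
Proof.
move=> [hQ QQ]; split; first by rewrite adjmxB adjmx1 hQ.
by rewrite mulmxBl mul1mx mulmxBr mulmx1 QQ subrr subr0.
Qed.

(* If P and N are Hermitian with P N = 0, the orthogonal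
   projection Q onto the row space of P satisfies P Q = P and N Q = 0.  With
   W a basis of the row space of P and G = W W^* (invertible since W has full
   row rank), Q = W^* G^-1 W. *)
Lemma support_projection n (P N : 'M[C]_n) :
  is_hermitian P -> is_hermitian N -> P *m N = 0 ->
  exists Q : 'M[C]_n, [/\ is_orthoproj Q, P *m Q = P & N *m Q = 0].
Proof.
move=> hP hN PN.
have [r [W [W_free PW WP]]] : exists r (W : 'M[C]_(r, n)),
    [/\ row_free W, (P <= W)%MS & (W <= P)%MS].
  by exists (\rank P), (row_base P); rewrite row_base_free !eq_row_base.
set G := W *m adjmx W.
have G_unit : G \in unitmx.
  rewrite -row_free_unit -kermx_eq0; apply/eqP.
  have KW : kermx G *m W = 0.
    rewrite -[kermx G *m W]adjmxK; apply/eqP; rewrite -adjmx0; apply/eqP.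
    congr adjmx; apply: gram_eq0.
    by rewrite adjmxK adjmxM mulmxA -(mulmxA (kermx G)) mulmx_ker mul0mx.
  by move/eqP: KW; rewrite mulmx_free_eq0 // => /eqP.
set H := invmx G.
have hG : adjmx G = G by rewrite adjmxM adjmxK.
have hH : adjmx H = H.
  have GH : G *m adjmx H = 1%:M by rewrite -hG -adjmxM mulVmx // adjmx1.
  by rewrite -[adjmx H]mul1mx -(mulVmx G_unit) -mulmxA GH mulmx1.
have WQ : W *m (adjmx W *m H *m W) = W.
  by rewrite !mulmxA -/G mulmxV // mul1mx.
exists (adjmx W *m H *m W); split; first split.
- by rewrite !adjmxM hH adjmxK mulmxA.
- by rewrite -mulmxA WQ.
- rewrite -(mulmxKpV PW); move: (P *m pinvmx W) => Y.
  by rewrite -[LHS]mulmxA WQ.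
- have NP : N *m P = 0 by rewrite -hP -hN -adjmxM PN adjmx0.
  rewrite -[W](mulmxKpV WP) adjmxM hP !mulmxA NP.
  by rewrite !mul0mx.
Qed.

Lemma psdZ n (c : C) (M : 'M[C]_n) : 0 <= c -> is_psd M -> is_psd (c *: M).
Proof.
move=> c_ge0 [hM pM]; split; first by rewrite /is_hermitian adjmxZ ge0_conj // hM.
by move=> v; rewrite -scalemxAr -scalemxAl mxE mulr_ge0.
Qed.

Lemma psdD n (M N : 'M[C]_n) : is_psd M -> is_psd N -> is_psd (M + N).
Proof.
move=> [hM pM] [hN pN]; split; first by rewrite /is_hermitian adjmxD hM hN.
by move=> v; rewrite mulmxDr mulmxDl mxE addr_ge0.
Qed.

(* Every PSD matrix is its trace times a density matrix (PSD of trace 1);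
   for P = 0 any density matrix, e.g. the maximally mixed one, will do. *)
Lemma psd_density n (P : 'M[C]_n.+1) : is_psd P ->
  exists D : 'M[C]_n.+1, [/\ is_psd D, \tr D = 1 & \tr P *: D = P].
Proof.
move=> hP; have [trP0 | trP_neq0] := eqVneq (\tr P) 0.
  have psd1 : is_psd (1%:M : 'M[C]_n.+1).
    by split=> [|v]; rewrite ?mulmx1 ?gram_diag_ge0 // /is_hermitian adjmx1.
  exists ((n.+1%:R)^-1 *: 1%:M); split.
  - by apply: psdZ => //; rewrite invr_ge0 ler0n.
  - by rewrite linearZ /= mxtrace1 mulVf ?pnatr_eq0.
  - by rewrite trP0 scale0r (psd_tr0 hP trP0).
exists ((\tr P)^-1 *: P); split.
- by apply: psdZ => //; rewrite invr_ge0 psd_tr_ge0.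
- by rewrite linearZ /= mulVf.
- by rewrite scalerA mulfV // scale1r.
Qed.

(* For an orthogonal projection Q, X |-> tr (Q X) is real on Hermitian
   matrices and nonnegative on PSD ones, since tr (Q X) = tr (Q^* X Q). *)
Lemma tr_proj_real n (Q X : 'M[C]_n) : adjmx Q = Q -> is_hermitian X ->
  (\tr (Q *m X))^*%C = \tr (Q *m X).
Proof. by move=> hQ hX; rewrite -tr_adjmx adjmxM hQ hX mxtrace_mulC. Qed.

Lemma tr_proj_ge0 n (Q X : 'M[C]_n) : is_orthoproj Q -> is_psd X ->
  0 <= \tr (Q *m X).
Proof.
move=> [hQ QQ] hX; have -> : \tr (Q *m X) = \tr (adjmx Q *m X *m Q).
  by rewrite hQ [RHS]mxtrace_mulC mulmxA QQ.
exact: tr_quad_ge0.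
Qed.

(* The measure-and-prepare map: measure the two-outcome observable
   {Q, 1 - Q} and prepare Dp or Dm according to the outcome. *)
Definition measure_prepare m n (Q : 'M[C]_m) (Dp Dm : 'M[C]_n) (X : 'M[C]_m)
    : 'M[C]_n :=
  \tr (Q *m X) *: Dp + \tr ((1%:M - Q) *m X) *: Dm.

Lemma measure_prepare_PTP n k (Q : 'M[C]_n.+1) (Dp Dm : 'M[C]_k.+1) :
  is_orthoproj Q -> is_psd Dp -> is_psd Dm -> \tr Dp = 1 -> \tr Dm = 1 ->
  PTP (measure_prepare Q Dp Dm).
Proof.
move=> hQ pDp pDm trDp trDm; have hQ' := orthoprojC hQ.
rewrite /measure_prepare; split.
- move=> X hX; rewrite /is_hermitian adjmxD !adjmxZ.
  by rewrite !tr_proj_real ?pDp.1 ?pDm.1 ?hQ.1 ?hQ'.1.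
- move=> a X Y _ _; rewrite !mulmxDr -!scalemxAr !linearD !linearZ /=.
  by rewrite !scalerDl !scalerA !(mulrC a%:C%C) addrACA.
- by move=> X hX; apply: psdD; apply: psdZ; rewrite // tr_proj_ge0.
- move=> X _; rewrite linearD !linearZ /= trDp trDm !mulr1 mulmxBl mul1mx.
  by rewrite linearB /= addrC subrK.
Qed.

(* Transfer: if tr A_+ = tr B_+ and tr A_- = tr B_-, some PTP map sends A to
   B, namely measure-and-prepare with the support projection of A_+ and the
   normalised parts of B. *)
Lemma PTP_transfer n k (A Ap Am : 'M[C]_n.+1) (B Bp Bm : 'M[C]_k.+1) :
  pos_neg_parts A Ap Am -> pos_neg_parts B Bp Bm ->
  \tr Ap = \tr Bp -> \tr Am = \tr Bm ->
  exists Phi : 'M[C]_n.+1 -> 'M[C]_k.+1, PTP Phi /\ Phi A = B.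
Proof.
move=> [pAp pAm -> ApAm] [pBp pBm -> _] trp trm.
have [Q [hQ ApQ AmQ]] := support_projection pAp.1 pAm.1 ApAm.
have [Dp [pDp trDp BpDp]] := psd_density pBp.
have [Dm [pDm trDm BmDm]] := psd_density pBm.
exists (measure_prepare Q Dp Dm); split; first exact: measure_prepare_PTP.
have trQAp : \tr (Q *m Ap) = \tr Ap by rewrite mxtrace_mulC ApQ.
have trQAm : \tr (Q *m Am) = 0 by rewrite mxtrace_mulC AmQ linear0.
rewrite /measure_prepare !mulmxBr !mulmxBl !mul1mx !linearB /= trQAp trQAm.
by rewrite subrr oppr0 !subr0 add0r addr0 trp trm scaleNr BpDp BmDm.
Qed.

End PTPMonotone.

Theorem mainTheorem13 (R : realType) (mu : forall n : nat, 'M[complex R]_n.+1 -> R)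
  (Hmu : PTP_monotone mu)
  (n k : nat) (A Ap Am : 'M[complex R]_n.+1) (B Bp Bm : 'M[complex R]_k.+1) :
  is_hermitian A -> is_hermitian B ->
  pos_neg_parts A Ap Am -> pos_neg_parts B Bp Bm ->
  trnorm Ap = trnorm Bp -> trnorm Am = trnorm Bm ->
  mu n A = mu k B.
Proof.
move=> hA hB partsA partsB normp normm.
have [pAp pAm _ _] := partsA; have [pBp pBm _ _] := partsB.
have trp : \tr Ap = \tr Bp by rewrite -!trnorm_psd // normp.
have trm : \tr Am = \tr Bm by rewrite -!trnorm_psd // normm.
have [Phi [PTP_Phi PhiA]] := PTP_transfer partsA partsB trp trm.
have [Psi [PTP_Psi PsiB]] := PTP_transfer partsB partsA (esym trp) (esym trm).
apply/le_anti/andP; split.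
- by rewrite -PsiB; apply: Hmu.
- by rewrite -PhiA; apply: Hmu.
Qed.
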